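(* Let $\mathbf V,\mathbf W$ be nonnegative arrays with $V_{1,1}=W_1=1$, $V_{n,k}>0$ for all $1\le k\le n$ and $W_s>0$ for all $s\ge1$, such that $\mathsf{Gibbs}_{[n]}(\mathbf V,\mathbf W)$ is a probability distribution for every $n$. Fix $n$, let $\Pi_{n+1}\sim\mathsf{Gibbs}_{[n+1]}(\mathbf V,\mathbf W)$, and let $\mathbf z=(z_1,\dots,z_{n+1})$ be its cluster membership vector, clusters labelled $1,2,\dots$ in order of first appearance. Given $\mathbf z_{1:n}=(z_1,\dots,z_n)$ with $k$ clusters of sizes $n_1,\dots,n_k$, one has $$\mathbb P(z_{n+1}=j\mid \mathbf z_{1:n})\propto\begin{cases} f(n_j), & j=1,\dots,k,\\ g(n,k), & j=k+1,\end{cases}$$ where $f(m)=W_{m+1}/W_m$ and $g(n,k)=V_{n+1,k+1}/V_{n+1,k}$. Moreover, $f$ is nondecreasing on $\mathbb N$ if and only if $\mathsf{Gibbs}_{[n]}(\mathbf V,\mathbf W)$ is balance-averse for every $n\ge1$, and $f$ is nonincreasing on $\mathbb N$ if and only if $\mathsf{Gibbs}_{[n]}(\mathbf V,\mathbf W)$ is balance-seeking for every $n\ge1$.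
   Context: For positive integers $k\le n$, $\mathcal I_n^k$ denotes the set of integer partitions of $n$ into $k$ parts, i.e. nonincreasing $k$-tuples $\mathbf n=(n_1,\dots,n_k)$ of positive integers with $\sum_j n_j=n$. For $\mathbf n,\mathbf n'\in\mathcal I_n^k$ write $\mathbf n\prec\mathbf n'$ if $\mathbf n\neq\mathbf n'$ and $\sum_{j=1}^J n_j\ge\sum_{j=1}^J n'_j$ for all $J=1,\dots,k$. A random partition $\Pi_n$ of $[n]$ is finitely exchangeable if its law is invariant under permutations of $[n]$; its EPPF is the symmetric function $p^{(n)}$ with $\mathbb P(\Pi_n=\{S_1,\dots,S_k\})=p^{(n)}(|S_1|,\dots,|S_k|)$. An EPPF is balance-averse if for all $k\le n$ and $\mathbf n,\mathbf n'\in\mathcal I_n^k$, $\mathbf n\prec\mathbf n'$ implies $p^{(n)}(\mathbf n)\ge p^{(n)}(\mathbf n')$; balance-seeking if it implies $p^{(n)}(\mathbf n)\le p^{(n)}(\mathbf n')$. $\Pi_n\sim\mathsf{Gibbs}_{[n]}(\mathbf V,\mathbf W)$ means $\Pi_n$ has EPPF $p^{(n)}(n_1,\dots,n_k)=V_{n,k}\prod_{j=1}^kW_{n_j}$. *)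

From HB Require Import structures.
From mathcomp Require Import all_boot all_order all_algebra.
Set Implicit Arguments. Unset Strict Implicit. Unset Printing Implicit Defensive.
Import Order.TTheory GRing.Theory Num.Theory.
Local Open Scope ring_scope.

Definition setpart (m : nat) (P : {set {set 'I_m}}) : bool :=
  partition P [set: 'I_m].

Definition gibbs_prob (R : nzRingType) (V : nat -> nat -> R) (W : nat -> R)
  (m : nat) (P : {set {set 'I_m}}) : R :=
  V m #|P| * \prod_(B in P) W #|B|.

Definition gibbs_is_prob (R : nzRingType) (V : nat -> nat -> R) (W : nat -> R)
  (m : nat) : Prop :=
  \sum_(P : {set {set 'I_m}} | setpart P) gibbs_prob V W P = 1.

Definition gibbs_Pr (R : nzRingType) (V : nat -> nat -> R) (W : nat -> R)
  (m : nat) (E : pred {set {set 'I_m}}) : R :=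
  \sum_(P : {set {set 'I_m}} | setpart P && E P) gibbs_prob V W P.

(* Cluster membership: the label (1,2,...) of the block containing i, blocks
   being labelled in order of first appearance, i.e. by the rank of their
   minimal element among the block minima. *)
Definition cluster_label (m : nat) (P : {set {set 'I_m}}) (i : 'I_m) : nat :=
  #|[set B in P | [exists x in B, [forall y in pblock P i, (x <= y)%N]]]|.

(* Event  z_{1:n} = w  for a partition of [n+1] (indices 0..n-1 are 1..n). *)
Definition prefix_event (n : nat) (w : seq nat) (P : {set {set 'I_n.+1}}) : bool :=
  [forall i : 'I_n.+1, (i < n)%N ==> (cluster_label P i == nth 0%N w i)].
Arguments prefix_event : clear implicits.

Definition cond_prob (R : fieldType) (V : nat -> nat -> R) (W : nat -> R)
  (n : nat) (w : seq nat) (j : nat) : R :=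
  gibbs_Pr V W (fun P : {set {set 'I_n.+1}} =>
                  prefix_event n w P && (cluster_label P ord_max == j))
  / gibbs_Pr V W (prefix_event n w).

Definition f_ratio (R : fieldType) (W : nat -> R) (m : nat) : R := W m.+1 / W m.
Definition g_ratio (R : fieldType) (V : nat -> nat -> R) (n k : nat) : R :=
  V n.+1 k.+1 / V n.+1 k.

Definition int_part (n k : nat) (s : seq nat) : bool :=
  [&& size s == k, all (fun x => 0 < x)%N s, sorted geq s & sumn s == n].

Definition prec_part (s s' : seq nat) : bool :=
  (s != s') &&
  all (fun J => sumn (take J s') <= sumn (take J s))%N (iota 1 (size s)).

Definition gibbs_eppf (R : nzRingType) (V : nat -> nat -> R) (W : nat -> R)
  (n : nat) (s : seq nat) : R :=
  V n (size s) * \prod_(x <- s) W x.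

Definition balance_averse (R : realDomainType) (p : seq nat -> R) (n : nat) : Prop :=
  forall (k : nat) (s s' : seq nat), int_part n k s -> int_part n k s' ->
    prec_part s s' -> p s' <= p s.

Definition balance_seeking (R : realDomainType) (p : seq nat -> R) (n : nat) : Prop :=
  forall (k : nat) (s s' : seq nat), int_part n k s -> int_part n k s' ->
    prec_part s s' -> p s <= p s'.

From HB Require Import structures.
From mathcomp Require Import all_boot all_order all_algebra.
From mathcomp Require Import ring zify.
Import Order.TTheory GRing.Theory Num.Theory.

(* Given z_{1:n} = w with k clusters, the event z_{n+1} = j is empty unless
   1 <= j <= k+1, and then it is a single partition of [n+1]: the one whose
   first-appearance labelling is w followed by j.  Its Gibbs weight is
   V_{n+1,k} prod_l W_{n_l} times W_{n_j+1}/W_{n_j} or V_{n+1,k+1}/V_{n+1,k},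
   which is the predictive rule.
   Telescoping W_x = prod_{1 <= t < x} f(t) gives
   prod_j W_{n_j} = prod_t f(t)^#{j | n_j > t}.  If n \prec n',
   the tails sum_j (n_j - T)^+ of n dominate those of n', and summation by
   parts turns a nondecreasing f into p(n) >= p(n'); balance-seeking is
   balance-aversion for 1/W.  Conversely (m+2, m) \prec (m+1, m+1) compares
   W_{m+2} W_m with W_{m+1}^2, that is f(m+1) with f(m). *)

Set Implicit Arguments. Unset Strict Implicit. Unset Printing Implicit Defensive.

Definition starts_before m (B C : {set 'I_m}) : bool :=
  [exists x in B, [forall y in C, (x <= y)%N]].

Lemma starts_beforeP m (B C : {set 'I_m}) :
  reflect (exists2 b, b \in B & forall y, y \in C -> (b <= y)%N)
          (starts_before B C).
Proof.
apply: (iffP existsP) => [[b /andP[Bb /forallP leC]]|[b Bb leC]].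
  by exists b => // y Cy; move: (leC y); rewrite Cy.
by exists b; rewrite Bb; apply/forallP => y; apply/implyP => /leC.
Qed.

Lemma starts_before_trans m (A B C : {set 'I_m}) :
  starts_before A B -> starts_before B C -> starts_before A C.
Proof.
move=> /starts_beforeP[a Aa leB] /starts_beforeP[b Bb leC].
by apply/starts_beforeP; exists a => // z /leC; apply/leq_trans/leB.
Qed.

Definition first_appearance_labelling m (z : 'I_m -> nat) : Prop :=
  [/\ forall x, (0 < z x)%N,
      forall x l, (0 < l <= z x)%N -> exists x', z x' = l &
      forall x y, (z x < z y)%N ->
        exists2 x', z x' = z x & forall y', z y' = z y -> (x' <= y')%N].

(* The junk value 0 is only taken on the empty set, which is never a block. *)
Definition block_value m (g : 'I_m -> nat) (B : {set 'I_m}) : nat :=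
  oapp g 0%N [pick b in B].

Section ClusterLabels.
Variables (m : nat) (P : {set {set 'I_m}}).
Hypothesis partP : setpart P.

Local Notation blk := (pblock P).
Local Notation lab := (cluster_label P).

Let tiP : trivIset P := partition_trivIset partP.
Let coverP x : x \in cover P.
Proof. by case/and3P: partP => /eqP ->; rewrite inE. Qed.

Lemma pblock_setpart x : blk x \in P.
Proof. exact: pblock_mem. Qed.

Lemma mem_pblock_self x : x \in blk x.
Proof. by rewrite mem_pblock. Qed.

Lemma pblock_eq_of_mem x y : y \in blk x -> blk y = blk x.
Proof. exact: same_pblock. Qed.

Lemma block_repr B : B \in P -> exists x, B = blk x.
Proof.
move=> PB; have /set0Pn[x Bx] : B != set0 by apply: partition_neq0 partP PB.
by exists x; rewrite (def_pblock tiP PB Bx).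
Qed.

Lemma pblock_min x : exists2 b, b \in blk x & forall y, y \in blk x -> (b <= y)%N.
Proof.
by case: (arg_minnP (fun i : 'I_m => nat_of_ord i) (mem_pblock_self x)) => b; exists b.
Qed.

Lemma starts_before_refl x : starts_before (blk x) (blk x).
Proof. by case: (pblock_min x) => b Bb leB; apply/starts_beforeP; exists b. Qed.

Lemma starts_before_total x y :
  starts_before (blk x) (blk y) || starts_before (blk y) (blk x).
Proof.
case: (pblock_min x) => a Ba leA; case: (pblock_min y) => c Bc leC.
case: (leqP a c) => [ac|/ltnW ca]; apply/orP; [left|right]; apply/starts_beforeP.
  by exists a => // z /leC; apply: leq_trans.
by exists c => // z /leA; apply: leq_trans.
Qed.

Lemma starts_before_anti x y :
  starts_before (blk x) (blk y) -> starts_before (blk y) (blk x) -> blk x = blk y.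
Proof.
move=> /starts_beforeP[a Ba leA] /starts_beforeP[c Bc leC].
have ac : a = c by apply/val_inj/eqP; rewrite eqn_leq leA // leC.
by rewrite -(pblock_eq_of_mem Ba) -(pblock_eq_of_mem Bc) ac.
Qed.

Definition earlier_blocks x := [set B in P | starts_before B (blk x)].

Lemma cluster_labelE x : lab x = #|earlier_blocks x|.
Proof. by []. Qed.

Lemma earlier_blocksS x y :
  starts_before (blk x) (blk y) -> earlier_blocks x \subset earlier_blocks y.
Proof.
move=> xy; apply/subsetP => B; rewrite !inE => /andP[-> Bx] /=.
exact: starts_before_trans Bx xy.
Qed.

Lemma cluster_label_lt x y :
  starts_before (blk x) (blk y) -> blk x != blk y -> (lab x < lab y)%N.
Proof.
move=> xy neq; rewrite !cluster_labelE; apply: proper_card.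
rewrite properE earlier_blocksS // andTb.
apply/subsetPn; exists (blk y); first by rewrite inE pblock_setpart starts_before_refl.
rewrite inE pblock_setpart andTb; apply: contra neq => yx.
by rewrite (starts_before_anti xy yx).
Qed.

Lemma cluster_label_eq x y : (lab x == lab y) = (y \in blk x).
Proof.
case yx: (y \in blk x).
  by rewrite /cluster_label (pblock_eq_of_mem yx) eqxx.
have neq : blk x != blk y by rewrite eq_pblock // yx.
case/orP: (starts_before_total x y) => [xy|yx'].
  by rewrite ltn_eqF // cluster_label_lt.
by rewrite gtn_eqF // cluster_label_lt // eq_sym.
Qed.

Lemma starts_before_of_cluster_label_lt x y :
  (lab x < lab y)%N -> starts_before (blk x) (blk y).
Proof.
move=> lt; case/orP: (starts_before_total x y) => // yx.
case: (eqVneq (blk y) (blk x)) => [eq|neq].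
  by move: lt; rewrite /cluster_label eq ltnn.
by move: (cluster_label_lt yx neq); rewrite ltnNge (ltnW lt).
Qed.

Lemma cluster_label_gt0 x : (0 < lab x)%N.
Proof.
rewrite cluster_labelE card_gt0; apply/set0Pn; exists (blk x).
by rewrite inE pblock_setpart starts_before_refl.
Qed.

Section BlockValue.
Variable g : 'I_m -> nat.
Hypothesis g_blocks : forall x y, (g x == g y) = (y \in blk x).

Lemma block_valueE B b : B \in P -> b \in B -> block_value g B = g b.
Proof.
move=> PB Bb; rewrite /block_value; case: pickP => [b' Bb'|/(_ b)]; last by rewrite Bb.
by apply/eqP; rewrite g_blocks (def_pblock tiP PB Bb').
Qed.

Lemma uniq_block_values x :
  uniq [seq block_value g B | B <- enum (earlier_blocks x)].
Proof.
rewrite map_inj_in_uniq ?enum_uniq // => B C; rewrite !mem_enum !inE.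
move=> /andP[PB _] /andP[PC _].
case: (block_repr PB) (block_repr PC) => b -> [c ->].
rewrite (block_valueE (pblock_setpart b) (mem_pblock_self b)).
rewrite (block_valueE (pblock_setpart c) (mem_pblock_self c)).
by move/eqP; rewrite g_blocks => /pblock_eq_of_mem.
Qed.

Lemma mem_block_values x v :
  (v \in [seq block_value g B | B <- enum (earlier_blocks x)]) =
  [exists b, starts_before (blk b) (blk x) && (g b == v)].
Proof.
apply/mapP/existsP => [[B]|[b /andP[bx /eqP <-]]].
  rewrite mem_enum inE => /andP[PB Bx] ->; case: (block_repr PB) Bx => b -> bx.
  by exists b; rewrite bx (block_valueE (pblock_setpart b) (mem_pblock_self b)) eqxx.
exists (blk b); first by rewrite mem_enum inE pblock_setpart.
by rewrite (block_valueE (pblock_setpart b) (mem_pblock_self b)).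
Qed.

End BlockValue.

(* The labels of the blocks starting before that of [x] are distinct and lie
   in [1, lab x]; there are [lab x] of them, so every value occurs. *)
Lemma cluster_label_surj x l :
  (0 < l <= lab x)%N -> exists2 x' : 'I_m, (x' <= x)%N & lab x' = l.
Proof.
move=> /andP[l_gt0 l_le].
have labs_sub : {subset [seq block_value lab B | B <- enum (earlier_blocks x)]
                  <= iota 1 (lab x)}.
  move=> v; rewrite mem_block_values; last exact: cluster_label_eq.
  case/existsP=> b /andP[bx /eqP <-].
  rewrite mem_iota cluster_label_gt0 add1n ltnS !cluster_labelE.
  exact/subset_leq_card/earlier_blocksS.
have size_labs : (size (iota 1 (lab x)) <=
    size [seq block_value lab B | B <- enum (earlier_blocks x)])%N.
  by rewrite size_iota size_map -cardE cluster_labelE.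
have [_ labs_eq] := uniq_min_size (uniq_block_values cluster_label_eq x) labs_sub size_labs.
have := labs_eq l; rewrite mem_iota l_gt0 add1n ltnS l_le.
rewrite mem_block_values; last exact: cluster_label_eq.
case/existsP=> b /andP[/starts_beforeP[b' Bb' leb'] /eqP <-].
exists b'; first by apply: leb'; exact: mem_pblock_self.
by apply/eqP; rewrite eq_sym cluster_label_eq.
Qed.

Lemma cluster_label_first x :
  exists2 b, lab b = lab x & forall y, (lab x <= lab y)%N -> (b <= y)%N.
Proof.
case: (pblock_min x) => b xb b_le.
exists b; first by apply/eqP; rewrite eq_sym cluster_label_eq.
move=> y; rewrite leq_eqVlt => /orP[/eqP e|/starts_before_of_cluster_label_lt].
  by apply: b_le; rewrite -cluster_label_eq e.
case/starts_beforeP=> c xc c_le.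
exact: leq_trans (b_le _ xc) (c_le _ (mem_pblock_self y)).
Qed.

Lemma preim_partition_cluster_label : preim_partition lab [set: 'I_m] = P.
Proof.
rewrite -[RHS](equivalence_partition_pblock partP); apply: eq_imset => x.
by apply/setP => y; rewrite !inE cluster_label_eq.
Qed.

Lemma cluster_label_unique (z : 'I_m -> nat) :
  (forall x y, (z x == z y) = (y \in blk x)) -> first_appearance_labelling z ->
  lab =1 z.
Proof.
move=> z_blocks [z_gt0 z_down z_first] y.
have before_le x : starts_before (blk x) (blk y) = (z x <= z y)%N.
  apply/starts_beforeP/idP => [[b xb b_le]|].
    rewrite leqNgt; apply/negP => lt.
    have [c zc c_le] := z_first _ _ lt.
    have zb : z b = z x by apply/eqP; rewrite eq_sym z_blocks.
    have bc : b = c.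
      by apply/val_inj/eqP; rewrite eqn_leq c_le // b_le // -z_blocks zc.
    by move: lt; rewrite -zb bc zc ltnn.
  rewrite leq_eqVlt => /orP[/eqP e|lt].
    have yx : y \in blk x by rewrite -z_blocks e.
    by apply/starts_beforeP; rewrite (pblock_eq_of_mem yx); apply: starts_before_refl.
  have [c zc c_le] := z_first _ _ lt.
  exists c; first by rewrite -z_blocks zc.
  by move=> y' yy'; apply: c_le; apply/eqP; rewrite eq_sym z_blocks.
have values_eq : [seq block_value z B | B <- enum (earlier_blocks y)] =i iota 1 (z y).
  move=> v; rewrite mem_block_values // mem_iota add1n ltnS.
  apply/existsP/idP => [[b /andP[b_before /eqP <-]]|/andP[v_gt0 v_le]].
    by rewrite z_gt0 -before_le.
  have [|x zx] := z_down y v; first by rewrite v_gt0.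
  by exists x; rewrite before_le zx v_le eqxx.
rewrite cluster_labelE.
have := uniq_size_uniq (uniq_block_values z_blocks y) values_eq.
by rewrite iota_uniq size_iota size_map -cardE => /esym/eqP.
Qed.

End ClusterLabels.

Lemma eq_preim_partition (T : finType) (rT : eqType) (f g : T -> rT) D :
  f =1 g -> preim_partition f D = preim_partition g D.
Proof. by move=> fg; apply: eq_imset => x; apply/setP => y; rewrite !inE !fg. Qed.

Lemma setpart_eq_preim_partition m (P : {set {set 'I_m}}) (z : 'I_m -> nat) :
  setpart P -> cluster_label P =1 z -> P = preim_partition z [set: 'I_m].
Proof.
move=> partP labz.
by rewrite -[LHS](preim_partition_cluster_label partP); apply: eq_preim_partition.
Qed.

Lemma setpart_preim_partition m (z : 'I_m -> nat) :
  setpart (preim_partition z [set: 'I_m]).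
Proof. exact: preim_partitionP. Qed.

Lemma cluster_label_preim_partition m (z : 'I_m -> nat) :
  first_appearance_labelling z -> cluster_label (preim_partition z [set: 'I_m]) =1 z.
Proof.
apply: cluster_label_unique; first exact: setpart_preim_partition.
move=> x y; rewrite pblock_equivalence_partition ?inE //.
by move=> ? ? ? _ _ _; split=> // /eqP->.
Qed.

Lemma mem_bigmax_seq (s : seq nat) : s != [::] -> \max_(x <- s) x \in s.
Proof.
elim: s => // a [|b s] IH _; first by rewrite big_seq1 mem_seq1.
rewrite big_cons inE; case: (leqP a (\max_(x <- b :: s) x)) => _.
  by rewrite IH ?orbT.
by rewrite eqxx.
Qed.

Lemma sum_nth_eq_count (s : seq nat) v :
  (\sum_(i < size s) (nth 0 s i == v))%N = count_mem v s.
Proof. by elim: s => [|a s IH]; rewrite ?big_ord0 // big_ord_recl /= IH. Qed.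

Lemma ord_max_of_ge n (i : 'I_n.+1) : (n <= i)%N -> i = ord_max.
Proof. by move=> n_le; apply/val_inj/eqP; rewrite eqn_leq n_le -ltnS ltn_ord. Qed.

(* Majorization of partitions amounts to domination of these tails. *)
Definition excess (s : seq nat) (T : nat) : nat := \sum_(x <- s) (x - T).

Lemma excessS (s : seq nat) T :
  excess s T = (\sum_(x <- s) (T < x) + excess s T.+1)%N.
Proof. by rewrite /excess -big_split /=; apply: eq_bigr => x _; case: ltnP; lia. Qed.

Lemma excess_all_le (s : seq nat) T : all (fun x => x <= T)%N s -> excess s T = 0%N.
Proof. by move=> /allP s_le; rewrite /excess big1_seq // => x /andP[_ /s_le]; lia. Qed.

Lemma excess_size_ge (s : seq nat) T : (sumn s <= excess s T + size s * T)%N.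
Proof. by elim: s => [|a s]; rewrite /excess ?big_nil // big_cons /=; lia. Qed.

Lemma excess_size_eq (s : seq nat) T : all (fun x => T <= x)%N s ->
  (excess s T + size s * T)%N = sumn s.
Proof.
elim: s => [|a s IH] /=; first by rewrite /excess big_nil.
by rewrite /excess big_cons -/(excess s T) => /andP[a_gt /IH]; lia.
Qed.

Lemma excess_1 (s : seq nat) : all (fun x => 0 < x)%N s ->
  excess s 1 = (sumn s - size s)%N.
Proof. by move=> /(@excess_size_eq s 1); rewrite muln1; lia. Qed.

Lemma sorted_geq_split (s : seq nat) T : sorted geq s ->
  exists J, [/\ (J <= size s)%N, all (fun x => T <= x)%N (take J s) &
                all (fun x => x <= T)%N (drop J s)].
Proof.
elim: s => [|x s IH] /=; first by exists 0%N.
move=> x_s; have [J [J_le s_gt s_le]] := IH (path_sorted x_s).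
have x_ge : all (geq x) s.
  by apply: order_path_min x_s => a b c ba cb; apply: leq_trans cb ba.
case: (leqP x T) => [x_le|x_gt]; last by exists J.+1; split; rewrite //= (ltnW x_gt).
exists 0%N; split=> //=; rewrite x_le /=.
by apply/allP => y /(allP x_ge) y_le; apply: leq_trans x_le.
Qed.

Lemma excess_le_of_prefix_sums (s s' : seq nat) T :
  sorted geq s' -> size s = size s' ->
  (forall J, (1 <= J <= size s)%N -> (sumn (take J s') <= sumn (take J s))%N) ->
  (excess s' T <= excess s T)%N.
Proof.
move=> s'_sorted size_eq prefix_le.
have [J [J_le s'_gt s'_le]] := sorted_geq_split T s'_sorted.
have excess_take : excess s' T = excess (take J s') T.
  rewrite -{1}(cat_take_drop J s') /excess big_cat /= -/(excess (drop J s') T).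
  by rewrite excess_all_le // addn0.
have eq_take := excess_size_eq s'_gt; rewrite size_takel // in eq_take.
have ge_take := excess_size_ge (take J s) T; rewrite size_takel ?size_eq // in ge_take.
have take_le : (excess (take J s) T <= excess s T)%N.
  by rewrite [X in (_ <= X)%N]/excess -{2}(cat_take_drop J s) big_cat leq_addr.
have sums_le : (sumn (take J s') <= sumn (take J s))%N.
  case: (posnP J) => [->|J_gt0]; first by rewrite !take0.
  by apply: prefix_le; rewrite J_gt0 size_eq.
lia.
Qed.

Lemma leq_sumn_mem (s : seq nat) x : x \in s -> (x <= sumn s)%N.
Proof.
elim: s => // a s IH; rewrite inE /= => /orP[/eqP->|/IH]; first exact: leq_addr.
by move/leq_trans; apply; apply: leq_addl.
Qed.

Lemma int_part_gt0 n k s : int_part n k s -> all (fun x => 0 < x)%N s.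
Proof. by case/and4P. Qed.

Lemma int_part_le n k s : int_part n k s -> all (fun x => x <= n)%N s.
Proof. by case/and4P=> _ _ _ /eqP <-; apply/allP => x /leq_sumn_mem. Qed.

Lemma size_int_part n k s : int_part n k s -> size s = k.
Proof. by case/and4P=> /eqP. Qed.

Lemma excess_int_part n k s : int_part n k s ->
  excess s 1 = (n - k)%N /\ excess s n = 0%N.
Proof.
move=> s_part.
rewrite excess_1 ?excess_all_le ?(int_part_gt0 s_part) ?(int_part_le s_part) //.
by case/and4P: s_part => /eqP <- _ _ /eqP <-.
Qed.

Lemma excess_le_of_prec n k s s' T : int_part n k s -> int_part n k s' ->
  prec_part s s' -> (excess s' T <= excess s T)%N.
Proof.
case/and4P=> /eqP size_s _ _ _ /and4P[/eqP size_s' _ s'_sorted _] /andP[_ /allP prefix_le].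
apply: excess_le_of_prefix_sums => //; first by rewrite size_s size_s'.
by move=> J J_range; apply: prefix_le; rewrite mem_iota add1n ltnS.
Qed.

Local Open Scope ring_scope.

Lemma gibbs_prob_preim_partition (R : comNzRingType) (V : nat -> nat -> R) (W : nat -> R)
    m (z : 'I_m -> nat) K :
  (forall x, 0 < z x <= K)%N -> (forall l, 0 < l <= K -> exists x, z x = l)%N ->
  gibbs_prob V W (preim_partition z [set: 'I_m]) =
  V m K * \prod_(l < K) W #|[set x | z x == l.+1]|.
Proof.
move=> z_range z_onto; set fiber := fun l : 'I_K => [set x | z x == l.+1].
have fiber_inj : injective fiber.
  move=> l1 l2 eq12; have [|x zx] := z_onto l1.+1; first by rewrite ltn_ord.
  have : x \in fiber l1 by rewrite inE zx.
  by rewrite eq12 inE zx eqSS => /eqP/val_inj.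
have -> : preim_partition z [set: 'I_m] = fiber @: [set: 'I_K].
  apply/setP => B; apply/imsetP/imsetP => [[x _ ->]|[l _ ->]].
    have /andP[zx_gt0 zx_le] := z_range x.
    have zx_lt : ((z x).-1 < K)%N by rewrite prednK.
    by exists (Ordinal zx_lt) => //; apply/setP => y; rewrite !inE /= prednK // eq_sym.
  have [|x zx] := z_onto l.+1; first by rewrite ltn_ord.
  by exists x => //; apply/setP => y; rewrite !inE zx eq_sym.
rewrite /gibbs_prob card_imset // cardsT card_ord big_imset /=.
  by congr (_ * _); apply: eq_bigl => l; rewrite inE.
by move=> l1 l2 _ _; apply: fiber_inj.
Qed.

Section PredictiveRule.
Variables (n : nat) (w : seq nat) (P0 : {set {set 'I_n.+1}}).
Hypotheses (n_gt0 : (0 < n)%N) (size_w : size w = n) (partP0 : setpart P0)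
  (P0w : prefix_event n w P0).

Local Notation k := (\max_(x <- w) x).
Local Notation lab0 := (cluster_label P0).

Lemma prefix_label (i : 'I_n.+1) : (i < n)%N -> lab0 i = nth 0 w i.
Proof. by move=> i_lt; move/forallP: P0w => /(_ i); rewrite i_lt => /eqP. Qed.

Lemma nth_le_max (i : nat) : (i < n)%N -> (nth 0 w i <= k)%N.
Proof.
by move=> i_lt; apply: (@leq_bigmax_seq _ w xpredT id); rewrite ?mem_nth ?size_w.
Qed.

Lemma max_label_attained : exists2 i0 : 'I_n.+1, (i0 < n)%N & lab0 i0 = k.
Proof.
have w_nil : w != [::] by rewrite -size_eq0 size_w -lt0n.
have i0_lt : (index k w < n)%N by rewrite -size_w index_mem mem_bigmax_seq.
exists (Ordinal (leqW i0_lt)) => //.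
by rewrite prefix_label //= nth_index // mem_bigmax_seq.
Qed.

Lemma max_label_gt0 : (0 < k)%N.
Proof. by case: max_label_attained => i0 _ <-; apply: cluster_label_gt0. Qed.

Lemma prefix_label_surj l : (0 < l <= k)%N ->
  exists2 x : 'I_n.+1, (x < n)%N & lab0 x = l.
Proof.
case: max_label_attained => i0 i0_lt lab_i0 l_range.
have [|x x_le lab_x] := cluster_label_surj partP0 (x := i0) (l := l).
  by rewrite lab_i0.
by exists x => //; apply: leq_ltn_trans x_le i0_lt.
Qed.

Lemma mem_prefix_labels l : (0 < l <= k)%N -> l \in w.
Proof.
by case/prefix_label_surj=> x x_lt <-; rewrite prefix_label // mem_nth ?size_w.
Qed.

Lemma max_label_le : (k <= n)%N.
Proof.
rewrite -size_w -(size_iota 1 k); apply: uniq_leq_size (iota_uniq 1 k) _ => l.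
by rewrite mem_iota add1n ltnS; apply: mem_prefix_labels.
Qed.

Definition extended_labels (j : nat) (i : 'I_n.+1) : nat :=
  if (i < n)%N then nth 0 w i else j.

Section Extension.
Variable j : nat.
Hypothesis j_range : (0 < j <= k.+1)%N.
Local Notation z := (extended_labels j).

Lemma extended_labels_prefix (x : 'I_n.+1) : (x < n)%N -> z x = lab0 x.
Proof. by move=> x_lt; rewrite /extended_labels x_lt prefix_label. Qed.

Lemma extended_labels_last (x : 'I_n.+1) : (n <= x)%N -> z x = j.
Proof. by rewrite /extended_labels leqNgt => /negbTE ->. Qed.

Lemma extended_labels_range x : (0 < z x <= maxn k j)%N.
Proof.
case: (ltnP x n) => [x_lt|x_ge].
  rewrite extended_labels_prefix // cluster_label_gt0 //= leq_max.
  by rewrite -extended_labels_prefix // /extended_labels x_lt nth_le_max.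
by rewrite extended_labels_last // leq_max leqnn orbT andbT; case/andP: j_range.
Qed.

Lemma extended_labels_down x l : (0 < l <= z x)%N -> exists x', z x' = l.
Proof.
case/andP=> l_gt0 l_le; case: (eqVneq l j) => [->|l_ne_j].
  by exists ord_max; rewrite extended_labels_last.
have l_le_k : (l <= k)%N.
  case: (ltnP x n) => [x_lt|x_ge].
    by apply: leq_trans l_le _; rewrite /extended_labels x_lt nth_le_max.
  rewrite extended_labels_last // in l_le; case/andP: j_range => _ j_le.
  by rewrite -ltnS; apply: leq_trans j_le; rewrite ltn_neqAle l_ne_j.
have [|x' x'_lt <-] := prefix_label_surj (l := l); first by rewrite l_gt0.
by exists x'; apply: extended_labels_prefix.
Qed.

Lemma extended_labels_first x y : (z x < z y)%N ->
  exists2 x', z x' = z x & forall y', z y' = z y -> (x' <= y')%N.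
Proof.
move=> lt.
have [x0 x0_lt lab_x0] : exists2 x0 : 'I_n.+1, (x0 < n)%N & lab0 x0 = z x.
  case: (ltnP x n) => [x_lt|x_ge]; first by exists x; rewrite ?extended_labels_prefix.
  case: (ltnP y n) => [y_lt|y_ge]; last first.
    by move: lt; rewrite !extended_labels_last // ltnn.
  apply: prefix_label_surj; have /andP[-> _] := extended_labels_range x.
  apply: leq_trans (ltnW lt) _.
  by rewrite extended_labels_prefix // prefix_label // nth_le_max.
have [b lab_b b_first] := cluster_label_first partP0 x0.
have b_lt : (b < n)%N by apply: leq_ltn_trans (b_first _ (leqnn _)) x0_lt.
exists b; first by rewrite extended_labels_prefix // lab_b.
move=> y' zy'; case: (ltnP y' n) => [y'_lt|y'_ge]; last exact: ltnW (leq_trans b_lt y'_ge).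
apply: b_first; rewrite lab_x0 -extended_labels_prefix // zy'.
exact: ltnW.
Qed.

Lemma extended_labels_first_appearance : first_appearance_labelling z.
Proof.
split; [by move=> x; case/andP: (extended_labels_range x) | |].
- exact: extended_labels_down.
- exact: extended_labels_first.
Qed.

End Extension.

Definition extended_partition j := preim_partition (extended_labels j) [set: 'I_n.+1].

Lemma prefix_last_eventE j (P : {set {set 'I_n.+1}}) :
  setpart P && (prefix_event n w P && (cluster_label P ord_max == j)) =
  (0 < j <= k.+1)%N && (P == extended_partition j).
Proof.
apply/idP/idP => [/and3P[partP Pw /eqP last_j]|/andP[j_range /eqP ->]].
  have lab_ext : cluster_label P =1 extended_labels j.
    move=> i; case: (ltnP i n) => [i_lt|i_ge].
      by move/forallP: Pw => /(_ i); rewrite i_lt /extended_labels i_lt => /eqP.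
    by rewrite /extended_labels ltnNge i_ge (ord_max_of_ge i_ge).
  have j_gt0 : (0 < j)%N by rewrite -last_j cluster_label_gt0.
  have j_le : (j <= k.+1)%N.
    rewrite leqNgt; apply/negP => lt.
    have [|x _] := cluster_label_surj partP (x := ord_max) (l := k.+1).
      by rewrite last_j (ltnW lt).
    rewrite lab_ext /extended_labels; case: ifP => [x_lt|_] e.
      by move: (nth_le_max x_lt); rewrite e ltnn.
    by move: lt; rewrite e ltnn.
  by rewrite j_gt0 j_le; apply/eqP/setpart_eq_preim_partition.
have labE := cluster_label_preim_partition (extended_labels_first_appearance j_range).
rewrite setpart_preim_partition labE /extended_labels ltnn eqxx andbT.
by apply/forallP => i; apply/implyP => i_lt; rewrite labE /extended_labels i_lt.
Qed.

Lemma card_extended_block j v :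
  #|[set x : 'I_n.+1 | extended_labels j x == v]| = (count_mem v w + (j == v))%N.
Proof.
rewrite -sum1dep_card big_mkcond /= big_ord_recr /= /extended_labels ltnn.
rewrite -size_w -sum_nth_eq_count size_w; congr (_ + _)%N.
by apply: eq_bigr => i _; rewrite /= ltn_ord; case: (_ == v).
Qed.

Section GibbsWeights.
Variables (R : realFieldType) (V : nat -> nat -> R) (W : nat -> R).
Hypotheses (V_gt0 : forall m i, (1 <= i)%N -> (i <= m)%N -> 0 < V m i)
  (W_gt0 : forall s, (1 <= s)%N -> 0 < W s) (W1 : W 1%N = 1).

Lemma gibbs_prob_extended j : (0 < j <= k.+1)%N ->
  gibbs_prob V W (extended_partition j) =
  V n.+1 (maxn k j) * \prod_(l < maxn k j) W (count_mem l.+1 w + (j == l.+1))%N.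
Proof.
move=> j_range.
rewrite /extended_partition (gibbs_prob_preim_partition _ _ (K := maxn k j)).
- by congr (_ * _); apply: eq_bigr => l _; rewrite card_extended_block.
- exact: extended_labels_range.
have [x zx] : exists x, extended_labels j x = maxn k j.
  case: (leqP j k) => [j_le|k_lt].
    case: max_label_attained => i0 i0_lt lab_i0.
    by exists i0; rewrite extended_labels_prefix // lab_i0 (maxn_idPl j_le).
  by exists ord_max; rewrite extended_labels_last // (maxn_idPr (ltnW k_lt)).
by move=> l l_range; apply: (extended_labels_down j_range (x := x)); rewrite zx.
Qed.

Definition prefix_weight := V n.+1 k * \prod_(l < k) W (count_mem l.+1 w).

Lemma count_prefix_label_gt0 l : (0 < l <= k)%N -> (0 < count_mem l w)%N.
Proof. by move=> l_range; rewrite -has_count has_pred1 mem_prefix_labels. Qed.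

Lemma prefix_weight_gt0 : 0 < prefix_weight.
Proof.
rewrite mulr_gt0 ?V_gt0 ?max_label_gt0 ?leqW ?max_label_le //.
by apply: prodr_gt0 => l _; rewrite W_gt0 // count_prefix_label_gt0 // ltn_ord.
Qed.

Lemma gibbs_prob_extended_existing j : (0 < j <= k)%N ->
  gibbs_prob V W (extended_partition j) = prefix_weight * f_ratio W (count_mem j w).
Proof.
case: j => // j j_le.
rewrite gibbs_prob_extended ?(leqW j_le) // (maxn_idPl j_le) -mulrA; congr (_ * _).
have split_j (l : 'I_k) : W (count_mem l.+1 w + (j.+1 == l.+1))%N =
    W (count_mem l.+1 w) * (if j.+1 == l.+1 then f_ratio W (count_mem j.+1 w) else 1).
  case: eqP => [->|_]; last by rewrite addn0 mulr1.
  rewrite addn1 /f_ratio mulrC divfK // gt_eqF // W_gt0 //.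
  by rewrite count_prefix_label_gt0 // ltn_ord.
rewrite (eq_bigr _ (fun l _ => split_j l)) big_split /= -big_mkcond /=.
by rewrite [X in _ * X](big_pred1 (Ordinal j_le)).
Qed.

Lemma gibbs_prob_extended_new :
  gibbs_prob V W (extended_partition k.+1) = prefix_weight * g_ratio V n k.
Proof.
rewrite gibbs_prob_extended ?leqnn // (maxn_idPr (leqnSn k)) big_ord_recr /=.
have -> : count_mem k.+1 w = 0%N.
  by apply/count_memPn/negP => /(@leq_bigmax_seq _ w xpredT id) /(_ isT); rewrite ltnn.
rewrite eqxx W1 mulr1 /prefix_weight /g_ratio.
have old_blocks (l : 'I_k) : W (count_mem l.+1 w + (k.+1 == l.+1))%N = W (count_mem l.+1 w).
  by rewrite eqSS gtn_eqF ?addn0.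
rewrite (eq_bigr _ (fun l _ => old_blocks l)).
have := V_gt0 max_label_gt0 (leqW max_label_le).
by move: (V n.+1 k) => v v_gt0; field; rewrite gt_eqF.
Qed.

Lemma gibbs_Pr_next_cluster j :
  gibbs_Pr V W (fun P => prefix_event n w P && (cluster_label P ord_max == j)) =
  prefix_weight * (if (1 <= j <= k)%N then f_ratio W (count_mem j w)
                   else if j == k.+1 then g_ratio V n k else 0).
Proof.
rewrite /gibbs_Pr (eq_bigl _ _ (prefix_last_eventE j)).
have [j_range|j_out] := boolP (0 < j <= k.+1)%N; last first.
  have not_old : (1 <= j <= k)%N = false by apply: contraNF j_out => /andP[-> /leqW].
  have not_new : (j == k.+1) = false by apply: contraNF j_out => /eqP->; rewrite leqnn.
  by rewrite big_pred0 => [|P]; rewrite ?not_old ?not_new ?mulr0 // (negbTE j_out).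
rewrite (big_pred1 (extended_partition j)) => [|P //].
case/andP: j_range => j_gt0; rewrite leq_eqVlt ltnS => /orP[/eqP->|j_le].
  by rewrite ltnn andbF eqxx gibbs_prob_extended_new.
by rewrite j_gt0 j_le gibbs_prob_extended_existing ?j_gt0.
Qed.

End GibbsWeights.

End PredictiveRule.

Lemma gibbs_predictive_rule (R : realFieldType) (V : nat -> nat -> R) (W : nat -> R)
  (V_gt0 : forall n k, (1 <= k)%N -> (k <= n)%N -> 0 < V n k)
  (W_gt0 : forall s, (1 <= s)%N -> 0 < W s) (W1 : W 1%N = 1) (n : nat) (w : seq nat) :
  (1 <= n)%N -> size w = n -> 0 < gibbs_Pr V W (prefix_event n w) ->
  let k := \max_(x <- w) x in
  exists c : R, 0 < c /\
    forall j : nat,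
      cond_prob V W n w j =
      c * (if (1 <= j <= k)%N then f_ratio W (count_mem j w)
           else if j == k.+1 then g_ratio V n k else 0).
Proof.
move=> n_gt0 size_w Pr_gt0 k.
have [P0 /andP[partP0 P0w]] : exists P0, setpart P0 && prefix_event n w P0.
  apply/existsP; apply: contraTT Pr_gt0 => /existsPn none.
  by rewrite /gibbs_Pr big_pred0 ?ltxx // => P; apply/negbTE/none.
exists (prefix_weight n w V W / gibbs_Pr V W (prefix_event n w)); split.
  by rewrite divr_gt0 // (prefix_weight_gt0 n_gt0 size_w partP0 P0w).
move=> j; rewrite /cond_prob (gibbs_Pr_next_cluster n_gt0 size_w partP0 P0w) //.
by rewrite mulrAC.
Qed.

Lemma ler_pdiv_cross (R : realFieldType) (a b c d : R) : 0 < b -> 0 < d ->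
  (a / b <= c / d) = (a * d <= c * b).
Proof. by move=> b_gt0 d_gt0; rewrite ler_pdivrMr // mulrAC ler_pdivlMr. Qed.

(* Summation by parts: prod_{t >= L} f t ^+ (a t - b t) equals
   f L ^+ (A L - B L) * prod_{t > L} (f t / f t.-1) ^+ (A t - B t),
   and the last product is >= 1. *)
Lemma abel_prod_le (R : realFieldType) (f : nat -> R) (a b A B : nat -> nat) (N : nat) :
  (forall t, (1 <= t)%N -> 0 < f t) -> (forall t, (1 <= t)%N -> f t <= f t.+1) ->
  (forall T, A T = a T + A T.+1)%N -> (forall T, B T = b T + B T.+1)%N ->
  A N = 0%N -> B N = 0%N -> (forall T, B T <= A T)%N ->
  forall L, (1 <= L <= N)%N ->
  f L ^+ (A L - B L) * \prod_(L <= t < N) f t ^+ b t <= \prod_(L <= t < N) f t ^+ a t.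
Proof.
move=> f_gt0 f_nondecr A_rec B_rec A_N B_N B_le L /andP[L_gt0 L_le].
have f_ge0 t : (1 <= t)%N -> 0 <= f t by move/f_gt0/ltW.
have : (L + (N - L) = N)%N by rewrite subnKC.
move: (N - L)%N => d; elim: d L L_gt0 {L_le} => [|d IH] L L_gt0 LdN.
  rewrite addn0 in LdN; subst N.
  by rewrite A_N B_N subnn expr0 mul1r big_geq // big_geq.
have L_lt : (L < N)%N by rewrite -LdN addnS ltnS leq_addr.
rewrite (big_ltn L_lt) (big_ltn L_lt).
have exps : (A L - B L + b L = a L + (A L.+1 - B L.+1))%N.
  by have := A_rec L; have := B_rec L; have := B_le L; have := B_le L.+1; lia.
rewrite mulrA -exprD exps exprD -mulrA ler_wpM2l ?exprn_ge0 ?f_ge0 //.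
apply: le_trans (IH L.+1 (leqW L_gt0) _); last by rewrite addSnnS.
apply: ler_wpM2r.
  rewrite big_nat_cond prodr_ge0 // => t /andP[/andP[L_lt_t _] _].
  by rewrite exprn_ge0 // f_ge0 // (leq_trans L_gt0 (ltnW L_lt_t)).
by rewrite lerXn2r ?nnegrE ?f_ge0 ?f_nondecr // leqW.
Qed.

Section WeightProducts.
Variables (R : realFieldType) (W : nat -> R).
Hypotheses (W_gt0 : forall s, (1 <= s)%N -> 0 < W s) (W1 : W 1%N = 1).

Lemma W_telescope x : (1 <= x)%N -> W x = \prod_(1 <= t < x) f_ratio W t.
Proof.
elim: x => // [[_ _|x IH _]]; first by rewrite big_geq.
by rewrite big_nat_recr //= -IH // /f_ratio mulrC divfK // gt_eqF // W_gt0.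
Qed.

Lemma W_as_prod_f_ratio N x : (1 <= x <= N)%N ->
  W x = \prod_(1 <= t < N) f_ratio W t ^+ (t < x)%N.
Proof.
case/andP=> x_gt0 x_le; rewrite W_telescope // [RHS](@big_cat_nat _ _ _ x) //=.
rewrite [X in _ = _ * X]big_nat_cond [X in _ = _ * X]big1 ?mulr1.
  by apply: eq_big_nat => t /andP[_ ->]; rewrite expr1.
by move=> t /andP[/andP[x_le_t _] _]; rewrite ltnNge x_le_t expr0.
Qed.

Lemma prod_W_as_prod_f_ratio N (s : seq nat) :
  all (fun x => 0 < x)%N s -> all (fun x => x <= N)%N s ->
  \prod_(x <- s) W x = \prod_(1 <= t < N) f_ratio W t ^+ (\sum_(x <- s) (t < x))%N.
Proof.
move=> /allP s_gt0 /allP s_le.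
rewrite (eq_big_seq (fun x => \prod_(1 <= t < N) f_ratio W t ^+ (t < x)%N)).
  by rewrite exchange_big /=; apply: eq_bigr => t _; rewrite prodrXr.
by move=> x s_x; rewrite -W_as_prod_f_ratio // s_gt0 // s_le.
Qed.

Lemma prod_W_le_of_prec (f_nondecr : forall m, (1 <= m)%N -> f_ratio W m <= f_ratio W m.+1)
    n k s s' :
  (1 <= n)%N -> int_part n k s -> int_part n k s' -> prec_part s s' ->
  \prod_(x <- s') W x <= \prod_(x <- s) W x.
Proof.
move=> n_gt0 s_part s'_part prec.
have [excess1 excessn] := excess_int_part s_part.
have [excess1' excessn'] := excess_int_part s'_part.
rewrite (prod_W_as_prod_f_ratio (int_part_gt0 s_part) (int_part_le s_part)).
rewrite (prod_W_as_prod_f_ratio (int_part_gt0 s'_part) (int_part_le s'_part)).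
have f_gt0 t : (1 <= t)%N -> 0 < f_ratio W t.
  by move=> t_gt0; rewrite divr_gt0 ?W_gt0 // leqW.
have := abel_prod_le f_gt0 f_nondecr (excessS s) (excessS s') excessn excessn'
  (fun T => excess_le_of_prec T s_part s'_part prec) (L := 1%N).
by rewrite n_gt0 excess1 excess1' subnn expr0 mul1r; apply.
Qed.

End WeightProducts.

Lemma prec_two_parts m : (1 <= m)%N ->
  [&& int_part (m.+1 + m.+1) 2 [:: m.+2; m], int_part (m.+1 + m.+1) 2 [:: m.+1; m.+1]
    & prec_part [:: m.+2; m] [:: m.+1; m.+1]].
Proof. by move=> m_gt0; rewrite /int_part /prec_part /= eqseq_cons /= !andbT; lia. Qed.

Section BalanceProperties.
Variables (R : realFieldType) (V : nat -> nat -> R) (W : nat -> R).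
Hypotheses (V_ge0 : forall n k, 0 <= V n k)
  (V_gt0 : forall n k, (1 <= k)%N -> (k <= n)%N -> 0 < V n k)
  (W_gt0 : forall s, (1 <= s)%N -> 0 < W s) (W1 : W 1%N = 1).

Lemma gibbs_eppf_two_parts n a b : gibbs_eppf V W n [:: a; b] = V n 2 * (W a * W b).
Proof. by rewrite /gibbs_eppf !big_cons big_nil mulr1. Qed.

Lemma gibbs_eppf_le_of_prod_le n k s s' : int_part n k s -> int_part n k s' ->
  \prod_(x <- s') W x <= \prod_(x <- s) W x -> gibbs_eppf V W n s' <= gibbs_eppf V W n s.
Proof.
move=> s_part s'_part.
by rewrite /gibbs_eppf (size_int_part s_part) (size_int_part s'_part); apply: ler_wpM2l.
Qed.

Lemma balance_averse_iff :
  (forall m, (1 <= m)%N -> f_ratio W m <= f_ratio W m.+1) <->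
  (forall n, (1 <= n)%N -> balance_averse (gibbs_eppf V W n) n).
Proof.
split=> [f_nondecr n n_gt0 k s s' s_part s'_part prec|averse m m_gt0].
  apply: (gibbs_eppf_le_of_prod_le s_part s'_part).
  exact: (prod_W_le_of_prec W_gt0 W1 f_nondecr n_gt0 s_part s'_part prec).
have /and3P[part part' prec] := prec_two_parts m_gt0.
have := averse (m.+1 + m.+1)%N isT _ _ _ part part' prec.
rewrite !gibbs_eppf_two_parts ler_pM2l => [le_pair|]; last by apply: V_gt0; lia.
by rewrite /f_ratio ler_pdiv_cross ?W_gt0 // ?leqW // mulrC.
Qed.

(* Balance-seeking for W is balance-aversion for 1/W. *)
Lemma f_ratio_inv m : f_ratio (fun s => (W s)^-1) m = (f_ratio W m)^-1.
Proof. by rewrite /f_ratio invf_div invrK mulrC. Qed.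

Lemma balance_seeking_iff :
  (forall m, (1 <= m)%N -> f_ratio W m.+1 <= f_ratio W m) <->
  (forall n, (1 <= n)%N -> balance_seeking (gibbs_eppf V W n) n).
Proof.
have f_gt0 m : (1 <= m)%N -> 0 < f_ratio W m by move=> m_gt0; rewrite divr_gt0 ?W_gt0 ?leqW.
split=> [f_nonincr n n_gt0 k s s' s_part s'_part prec|seeking m m_gt0].
  apply: (gibbs_eppf_le_of_prod_le s'_part s_part).
  have Winv_gt0 x : (1 <= x)%N -> 0 < (W x)^-1 by move=> x_gt0; rewrite invr_gt0 W_gt0.
  have Winv_nondecr m : (1 <= m)%N ->
      f_ratio (fun x => (W x)^-1) m <= f_ratio (fun x => (W x)^-1) m.+1.
    by move=> m_gt0; rewrite !f_ratio_inv lef_pV2 ?posrE ?f_gt0 ?f_nonincr ?leqW.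
  have Winv1 : (W 1%N)^-1 = 1 by rewrite W1 invr1.
  have := prod_W_le_of_prec Winv_gt0 Winv1 Winv_nondecr n_gt0 s_part s'_part prec.
  have prod_gt0 t : all (fun x => 0 < x)%N t -> 0 < \prod_(x <- t) W x.
    by move=> /allP t_gt0; rewrite big_seq prodr_gt0 // => x /t_gt0 /W_gt0.
  by rewrite !prodfV lef_pV2 ?posrE ?prod_gt0
    ?(int_part_gt0 s_part) ?(int_part_gt0 s'_part).
have /and3P[part part' prec] := prec_two_parts m_gt0.
have := seeking (m.+1 + m.+1)%N isT _ _ _ part part' prec.
rewrite !gibbs_eppf_two_parts ler_pM2l => [le_pair|]; last by apply: V_gt0; lia.
by rewrite /f_ratio ler_pdiv_cross ?W_gt0 // ?leqW // mulrC.
Qed.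

End BalanceProperties.

Unset Implicit Arguments. Set Strict Implicit. Set Printing Implicit Defensive.

Theorem corollary3p3 (R : realFieldType) (V : nat -> nat -> R) (W : nat -> R)
  (V_ge0 : forall n k, 0 <= V n k) (W_ge0 : forall s, 0 <= W s)
  (V11 : V 1%N 1%N = 1) (W1 : W 1%N = 1)
  (V_gt0 : forall n k, (1 <= k)%N -> (k <= n)%N -> 0 < V n k)
  (W_gt0 : forall s, (1 <= s)%N -> 0 < W s)
  (Hprob : forall n, (1 <= n)%N -> gibbs_is_prob V W n) :
  (forall (n : nat) (w : seq nat), (1 <= n)%N -> size w = n ->
     0 < gibbs_Pr V W (prefix_event n w) ->
     let k := \max_(x <- w) x in
     exists c : R, 0 < c /\
       forall j : nat,
         cond_prob V W n w j =
         c * (if (1 <= j <= k)%N then f_ratio W (count_mem j w)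
              else if j == k.+1 then g_ratio V n k else 0)) /\
  ((forall m, (1 <= m)%N -> f_ratio W m <= f_ratio W m.+1) <->
     (forall n, (1 <= n)%N -> balance_averse (gibbs_eppf V W n) n)) /\
  ((forall m, (1 <= m)%N -> f_ratio W m.+1 <= f_ratio W m) <->
     (forall n, (1 <= n)%N -> balance_seeking (gibbs_eppf V W n) n)).
Proof.
split; first exact: gibbs_predictive_rule.
by split; [apply: balance_averse_iff | apply: balance_seeking_iff].
Qed.
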